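(* Let $G$ be a structured quadratic-bilinear system given by $(\mathcal C,\mathcal K,\mathcal B,\mathcal N,\mathcal H)$ with structured symmetric subsystem transfer functions $G_k$, and let $\widehat G$ be the reduced-order system obtained by projection with basis matrices $V,W\in\mathbb C^{n\times r}$, with reduced symmetric subsystem transfer functions $\widehat G_k$. Let $\sigma_1,\sigma_2\in\mathbb C$ be such that $\mathcal C,\mathcal K,\mathcal B,\mathcal N,\mathcal H$ can be evaluated at $\sigma_1$, $\sigma_2$, $\sigma_1+\sigma_2$ (resp. at the pairs $(\sigma_1,\sigma_2),(\sigma_2,\sigma_1)$ for $\mathcal H$) and $\mathcal K(\sigma_1),\mathcal K(\sigma_2),\mathcal K(\sigma_1+\sigma_2)$ are invertible. Define $$V_{1,1}=\mathcal K(\sigma_1)^{-1}\mathcal B(\sigma_1),\quad V_{1,2}=\mathcal K(\sigma_2)^{-1}\mathcal B(\sigma_2),$$ $$V_2=\mathcal K(\sigma_1+\sigma_2)^{-1}\big(\mathcal H(\sigma_1,\sigma_2)(V_{1,1}\otimes V_{1,2})+\mathcal H(\sigma_2,\sigma_1)(V_{1,2}\otimes V_{1,1})+\mathcal N(\sigma_1)(I_m\otimes V_{1,1})+\mathcal N(\sigma_2)(I_m\otimes V_{1,2})\big).$$ Suppose $\operatorname{span}(V)\supseteq\operatorname{span}([V_{1,1}\ V_{1,2}\ V_2])$, $V$ has full column rank, and $W\in\mathbb C^{n\times r}$ is an arbitrary full-rank matrix such that $W^{\mathsf H}\mathcal K(s)V$ is invertible for $s\in\{\sigma_1,\sigma_2,\sigma_1+\sigma_2\}$.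 Then $$G_1(\sigma_1)=\widehat G_1(\sigma_1),\qquad G_1(\sigma_2)=\widehat G_1(\sigma_2),\qquad G_2(\sigma_1,\sigma_2)=\widehat G_2(\sigma_1,\sigma_2).$$
   Context: A structured quadratic-bilinear system (in frequency domain) with $n$ states, $m$ inputs and $p$ outputs is given by matrix-valued functions $\mathcal C:\mathbb C\to\mathbb C^{p\times n}$, $\mathcal K:\mathbb C\to\mathbb C^{n\times n}$, $\mathcal B:\mathbb C\to\mathbb C^{n\times m}$, $\mathcal N:\mathbb C\to\mathbb C^{n\times nm}$ with $\mathcal N(s)=[\mathcal N_1(s)\ \cdots\ \mathcal N_m(s)]$, $\mathcal N_j(s)\in\mathbb C^{n\times n}$, and $\mathcal H:\mathbb C\times\mathbb C\to\mathbb C^{n\times n^2}$. Its structured symmetric subsystem transfer functions are $G_1(s_1)=\mathcal C(s_1)g_1(s_1)$, $G_2(s_1,s_2)=\mathcal C(s_1+s_2)g_2(s_1,s_2)$, $G_3(s_1,s_2,s_3)=\mathcal C(s_1+s_2+s_3)g_3(s_1,s_2,s_3)$, where $g_1(s_1)=\mathcal K(s_1)^{-1}\mathcal B(s_1)$, $g_2(s_1,s_2)=\tfrac12\mathcal K(s_1+s_2)^{-1}\big(\mathcal H(s_1,s_2)(g_1(s_1)\otimes g_1(s_2))+\mathcal H(s_2,s_1)(g_1(s_2)\otimes g_1(s_1))+\mathcal N(s_1)(I_m\otimes g_1(s_1))+\mathcal N(s_2)(I_m\otimes g_1(s_2))\big)$, $g_3(s_1,s_2,s_3)=\tfrac16\mathcal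 K(s_1+s_2+s_3)^{-1}\big(\mathcal H(s_1+s_2,s_3)(g_2(s_1,s_2)\otimes g_1(s_3))+\mathcal H(s_1+s_3,s_2)(g_2(s_1,s_3)\otimes g_1(s_2))+\mathcal H(s_2+s_3,s_1)(g_2(s_2,s_3)\otimes g_1(s_1))+\mathcal H(s_1,s_2+s_3)(g_1(s_1)\otimes g_2(s_2,s_3))+\mathcal H(s_2,s_1+s_3)(g_1(s_2)\otimes g_2(s_1,s_3))+\mathcal H(s_3,s_1+s_2)(g_1(s_3)\otimes g_2(s_1,s_2))+\mathcal N(s_1+s_2)(I_m\otimes g_2(s_1,s_2))+\mathcal N(s_1+s_3)(I_m\otimes g_2(s_1,s_3))+\mathcal N(s_2+s_3)(I_m\otimes g_2(s_2,s_3))\big)$, wherever the inverses exist; $\otimes$ is the Kronecker product. The reduced-order system obtained by projection with $V,W\in\mathbb C^{n\times r}$ is given by $\widehat{\mathcal C}(s)=\mathcal C(s)V$, $\widehat{\mathcal K}(s)=W^{\mathsf H}\mathcal K(s)V$, $\widehat{\mathcal B}(s)=W^{\mathsf H}\mathcal B(s)$, $\widehat{\mathcal N}(s)=W^{\mathsf H}\mathcal N(s)(I_m\otimes V)=[W^{\mathsf H}\mathcal N_1(s)V\ \cdots\ W^{\mathsf H}\mathcal N_m(s)V]$, $\widehat{\mathcal H}(s_1,s_2)=W^{\mathsf H}\mathcal H(s_1,s_2)(V\otimes V)$, where $W^{\mathsf H}$ is the conjugate transpose; its transfer functions $\widehat G_k$ are defined by the same formulas with hatted functions (dimension $r$ in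 place of $n$). *)

(* Scalars: an arbitrary numClosedFieldType C
   (the complex numbers are an instance), so that conjugation ^* and the
   conjugate transpose W^H are available. *)
From mathcomp Require Import all_boot all_order all_algebra.
From mathcomp Require Export mxtens.
Set Implicit Arguments.
Unset Strict Implicit.
Unset Printing Implicit Defensive.
Import GRing.Theory Num.Theory.
Local Open Scope ring_scope.

Section QB.
Variable C : numClosedFieldType.

Definition ctrmx (a b : nat) (W : 'M[C]_(a, b)) : 'M[C]_(b, a) :=
  map_mx (fun x => x^*) W^T.

(* Kronecker product: A *t B from mathcomp-real-closed mxtens,
   (A *t B) (i1*p + i2) (j1*q + j2) = A i1 j1 * B i2 j2. *)

(* A structured QB system with k states, m inputs, p outputs:
   Cf : C -> 'M_(p,k), Kf : C -> 'M_k, Bf : C -> 'M_(k,m),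
   Nf : C -> 'M_(k, m*k)  (= [N_1 ... N_m], m blocks of k columns),
   Hf : C -> C -> 'M_(k, k*k). *)

Definition g1 (k m : nat) (Kf : C -> 'M[C]_k) (Bf : C -> 'M[C]_(k, m))
  (s1 : C) : 'M[C]_(k, m) := invmx (Kf s1) *m Bf s1.

Definition g2 (k m : nat) (Kf : C -> 'M[C]_k) (Bf : C -> 'M[C]_(k, m))
  (Nf : C -> 'M[C]_(k, m * k)) (Hf : C -> C -> 'M[C]_(k, k * k))
  (s1 s2 : C) : 'M[C]_(k, m * m) :=
  (2%:R)^-1 *: (invmx (Kf (s1 + s2)) *m
     (Hf s1 s2 *m (g1 Kf Bf s1 *t g1 Kf Bf s2)
    + Hf s2 s1 *m (g1 Kf Bf s2 *t g1 Kf Bf s1)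
    + Nf s1 *m ((1%:M : 'M[C]_m) *t g1 Kf Bf s1)
    + Nf s2 *m ((1%:M : 'M[C]_m) *t g1 Kf Bf s2))).

Definition G1 (k m p : nat) (Cf : C -> 'M[C]_(p, k)) (Kf : C -> 'M[C]_k)
  (Bf : C -> 'M[C]_(k, m)) (s1 : C) : 'M[C]_(p, m) :=
  Cf s1 *m g1 Kf Bf s1.

Definition G2 (k m p : nat) (Cf : C -> 'M[C]_(p, k)) (Kf : C -> 'M[C]_k)
  (Bf : C -> 'M[C]_(k, m)) (Nf : C -> 'M[C]_(k, m * k))
  (Hf : C -> C -> 'M[C]_(k, k * k)) (s1 s2 : C) : 'M[C]_(p, m * m) :=
  Cf (s1 + s2) *m g2 Kf Bf Nf Hf s1 s2.

Definition redC (n r p : nat) (V : 'M[C]_(n, r)) (Cf : C -> 'M[C]_(p, n))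
  : C -> 'M[C]_(p, r) := fun s => Cf s *m V.
Definition redK (n r : nat) (V W : 'M[C]_(n, r)) (Kf : C -> 'M[C]_n)
  : C -> 'M[C]_r := fun s => ctrmx W *m Kf s *m V.
Definition redB (n r m : nat) (W : 'M[C]_(n, r)) (Bf : C -> 'M[C]_(n, m))
  : C -> 'M[C]_(r, m) := fun s => ctrmx W *m Bf s.
Definition redN (n r m : nat) (V W : 'M[C]_(n, r)) (Nf : C -> 'M[C]_(n, m * n))
  : C -> 'M[C]_(r, m * r) :=
  fun s => ctrmx W *m Nf s *m ((1%:M : 'M[C]_m) *t V).
Definition redH (n r : nat) (V W : 'M[C]_(n, r)) (Hf : C -> C -> 'M[C]_(n, n * n))
  : C -> C -> 'M[C]_(r, r * r) :=
  fun s1 s2 => ctrmx W *m Hf s1 s2 *m (V *t V).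

End QB.

From mathcomp Require Import all_boot all_order all_algebra.
Import GRing.Theory Num.Theory.
Local Open Scope ring_scope.

(* The projected system solves
   K^(s) y = B^(s) with K^ = W^H K V and B^ = W^H B.  If the full solution
   x = K(s)^-1 B(s) lies in the column span of V, say x = V y, then
   W^H B = W^H K V y, so the reduced solve returns exactly y and x = V y is
   reproduced; applying C(s) gives C(s) x = (C(s) V) y.  This settles G1 at
   sigma1 and sigma2.  For G2, once g1(s_i) = V g1^(s_i) for i = 1, 2, the
   Kronecker mixed-product rule shows that the reduced right-hand side of
   the second-order equation is W^H times the full one; since the full
   second-order solution V2 lies in span(V) as well, the same argument
   applies once more. *)

Lemma colspan_factor {C : fieldType} {n r k : nat}
  {V : 'M[C]_(n, r)} {X : 'M[C]_(n, k)} :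
  (X^T <= V^T)%MS -> exists Y, X = V *m Y.
Proof.
by move/submxP=> [D XD]; exists D^T; rewrite -[X]trmxK XD trmx_mul trmxK.
Qed.

Definition rhs2 {C : numClosedFieldType} {k m : nat}
  (K : C -> 'M[C]_k) (B : C -> 'M[C]_(k, m))
  (N : C -> 'M[C]_(k, m * k)) (H : C -> C -> 'M[C]_(k, k * k))
  (s1 s2 : C) : 'M[C]_(k, m * m) :=
  H s1 s2 *m (g1 K B s1 *t g1 K B s2) + H s2 s1 *m (g1 K B s2 *t g1 K B s1)
  + N s1 *m ((1%:M : 'M[C]_m) *t g1 K B s1)
  + N s2 *m ((1%:M : 'M[C]_m) *t g1 K B s2).

Lemma g2E {C : numClosedFieldType} {k m : nat}
  (K : C -> 'M[C]_k) (B : C -> 'M[C]_(k, m))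
  (N : C -> 'M[C]_(k, m * k)) (H : C -> C -> 'M[C]_(k, k * k)) (s1 s2 : C) :
  g2 K B N H s1 s2 = 2%:R^-1 *: (invmx (K (s1 + s2)) *m rhs2 K B N H s1 s2).
Proof. by []. Qed.

Section Projection.
Context {C : numClosedFieldType} {n r m p : nat} {V W : 'M[C]_(n, r)}.
Context {Cf : C -> 'M[C]_(p, n)} {Kf : C -> 'M[C]_n} {Bf : C -> 'M[C]_(n, m)}.
Context {Nf : C -> 'M[C]_(n, m * n)} {Hf : C -> C -> 'M[C]_(n, n * n)}.

Let Ch := redC V Cf.
Let Kh := redK V W Kf.
Let Bh := redB W Bf.
Let Nh := redN V W Nf.
Let Hh := redH V W Hf.

Lemma reduced_solve {k : nat} {K : 'M[C]_n} {b : 'M[C]_(n, k)} {y : 'M[C]_(r, k)} :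
  ctrmx W *m K *m V \in unitmx -> K *m (V *m y) = b ->
  invmx (ctrmx W *m K *m V) *m (ctrmx W *m b) = y.
Proof.
by move=> unitKh <-; rewrite (mulmxA (ctrmx W)) (mulmxA (ctrmx W *m K)) mulKmx.
Qed.

Lemma solution_in_span {k : nat} {K : 'M[C]_n} {b : 'M[C]_(n, k)} {y : 'M[C]_(r, k)} :
  K \in unitmx -> invmx K *m b = V *m y -> K *m (V *m y) = b.
Proof. by move=> unitK <-; rewrite mulKVmx. Qed.

Lemma g1_reduced {s : C} {y : 'M[C]_(r, m)} :
  Kf s \in unitmx -> Kh s \in unitmx -> g1 Kf Bf s = V *m y ->
  g1 Kh Bh s = y.
Proof. by move=> unitK unitKh /(solution_in_span unitK); apply: reduced_solve. Qed.

Lemma G1_reduced {s : C} {y : 'M[C]_(r, m)} :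
  Kf s \in unitmx -> Kh s \in unitmx -> g1 Kf Bf s = V *m y ->
  G1 Cf Kf Bf s = G1 Ch Kh Bh s.
Proof.
move=> unitK unitKh g1V.
by rewrite /G1 (g1_reduced unitK unitKh g1V) g1V mulmxA.
Qed.

(* When both first-order solutions are reproduced by V, the mixed-product
   rule (A *t B)(A' *t B') = AA' *t BB' makes the reduced right-hand side
   the Galerkin projection W^H of the full one. *)
Lemma rhs2_reduced (s1 s2 : C) :
  g1 Kf Bf s1 = V *m g1 Kh Bh s1 -> g1 Kf Bf s2 = V *m g1 Kh Bh s2 ->
  rhs2 Kh Bh Nh Hh s1 s2 = ctrmx W *m rhs2 Kf Bf Nf Hf s1 s2.
Proof.
move=> g1V1 g1V2.
rewrite /rhs2 /Hh /Nh /redH /redN -!mulmxA !tensmx_mul mul1mx -g1V1 -g1V2.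
by rewrite !mulmxDr.
Qed.

Lemma G2_reduced {s1 s2 : C} {y : 'M[C]_(r, m * m)} :
  g1 Kf Bf s1 = V *m g1 Kh Bh s1 -> g1 Kf Bf s2 = V *m g1 Kh Bh s2 ->
  Kf (s1 + s2) \in unitmx -> Kh (s1 + s2) \in unitmx ->
  invmx (Kf (s1 + s2)) *m rhs2 Kf Bf Nf Hf s1 s2 = V *m y ->
  G2 Cf Kf Bf Nf Hf s1 s2 = G2 Ch Kh Bh Nh Hh s1 s2.
Proof.
move=> g1V1 g1V2 unitK unitKh solV.
have reduced_sol : invmx (Kh (s1 + s2)) *m rhs2 Kh Bh Nh Hh s1 s2 = y.
  by rewrite rhs2_reduced //; apply: reduced_solve => //; apply: solution_in_span.
rewrite /G2 !g2E reduced_sol solV /Ch /redC.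
by rewrite -!scalemxAr mulmxA.
Qed.

End Projection.

Theorem proposition4p1 (C : numClosedFieldType) (n m p r : nat)
  (Cf : C -> 'M[C]_(p, n)) (Kf : C -> 'M[C]_n) (Bf : C -> 'M[C]_(n, m))
  (Nf : C -> 'M[C]_(n, m * n)) (Hf : C -> C -> 'M[C]_(n, n * n))
  (V W : 'M[C]_(n, r)) (sigma1 sigma2 : C) :
  Kf sigma1 \in unitmx ->
  Kf sigma2 \in unitmx ->
  Kf (sigma1 + sigma2) \in unitmx ->
  let V11 := invmx (Kf sigma1) *m Bf sigma1 in
  let V12 := invmx (Kf sigma2) *m Bf sigma2 in
  let V2 := invmx (Kf (sigma1 + sigma2)) *m
      (Hf sigma1 sigma2 *m (V11 *t V12) + Hf sigma2 sigma1 *m (V12 *t V11)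
       + Nf sigma1 *m ((1%:M : 'M[C]_m) *t V11)
       + Nf sigma2 *m ((1%:M : 'M[C]_m) *t V12)) in
  (* span(V) contains span([V11 V12 V2]) (column spaces) *)
  ((row_mx (row_mx V11 V12) V2)^T <= V^T)%MS ->
  \rank V = r ->
  \rank W = r ->
  ctrmx W *m Kf sigma1 *m V \in unitmx ->
  ctrmx W *m Kf sigma2 *m V \in unitmx ->
  ctrmx W *m Kf (sigma1 + sigma2) *m V \in unitmx ->
  let Ch := redC V Cf in
  let Kh := redK V W Kf in
  let Bh := redB W Bf in
  let Nh := redN V W Nf in
  let Hh := redH V W Hf in
  [/\ G1 Cf Kf Bf sigma1 = G1 Ch Kh Bh sigma1,
      G1 Cf Kf Bf sigma2 = G1 Ch Kh Bh sigma2
    & G2 Cf Kf Bf Nf Hf sigma1 sigma2 = G2 Ch Kh Bh Nh Hh sigma1 sigma2].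
Proof.
move=> unitK1 unitK2 unitK12 V11 V12 V2 spanV _ _ unitKh1 unitKh2 unitKh12.
move=> Ch Kh Bh Nh Hh.
move: spanV; rewrite !tr_row_mx !col_mx_sub => /andP[/andP[span1 span2] span12].
have [y1 g1V1] := colspan_factor span1.
have [y2 g1V2] := colspan_factor span2.
have [y12 solV] := colspan_factor span12.
have g1h1 := g1_reduced unitK1 unitKh1 g1V1.
have g1h2 := g1_reduced unitK2 unitKh2 g1V2.
rewrite -g1h1 in g1V1; rewrite -g1h2 in g1V2.
split; first exact: G1_reduced unitK1 unitKh1 g1V1.
  exact: G1_reduced unitK2 unitKh2 g1V2.
exact: G2_reduced g1V1 g1V2 unitK12 unitKh12 solV.
Qed.
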